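(* $o(\mathsf{T_f}(1))=\omega$.
   Context: $1$ denotes the one-element quasi-order $\{0\}$. Trees: for a non-empty quasi-order $Q$, $\mathsf{T_f}(Q)$ is the smallest class containing the leaf $\cdot q$ for each $q\in Q$, and containing $\cdot(\tau_0,\dots,\tau_{k-1})$ (an unlabelled root whose children are the $\tau_i$) for every finite set $\{\tau_0,\dots,\tau_{k-1}\}\subseteq\mathsf{T_f}(Q)$ with $k\ge1$. Its order $\le_T$ is defined recursively: - $\cdot x\le_T\cdot y$ iff $x\le_Q y$; - $\cdot x\le_T\cdot(\tau_j)_{j<l}$ iff $\cdot x\le_T\tau_j$ for some $j$; - $\cdot(\sigma_i)_{i<k}\le_T\cdot(\tau_j)_{j<l}$ iff every $\sigma_i$ is $\le_T$ some $\tau_j$; - a non-leaf tree is never $\le_T$ a leaf. For a well-quasi-order $P$, $o(P)$ is the supremum of the order types of linearizations of $P$, i.e. linear quasi-orders on the same set extending its order. *)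

From Stdlib Require Import List Arith.
Import ListNotations.

Inductive rtree (A : Type) : Type :=
| RLeaf : A -> rtree A
| RNode : list (rtree A) -> rtree A.
Arguments RLeaf {A} _.
Arguments RNode {A} _.

Fixpoint wf_tree {A : Type} (t : rtree A) : Prop :=
  match t with
  | RLeaf _ => True
  | RNode ts =>
      ts <> [] /\
      (fix allwf (l : list (rtree A)) : Prop :=
         match l with
         | [] => True
         | u :: l' => wf_tree u /\ allwf l'
         end) ts
  end.

Section TreeOrder.
Variables (A : Type) (leA : A -> A -> Prop).

Fixpoint leaf_le (x : A) (t : rtree A) : Prop :=
  match t with
  | RLeaf y => leA x y
  | RNode ts =>
      (fix ex (l : list (rtree A)) : Prop :=
         match l with
         | [] => False
         | u :: l' => leaf_le x u \/ ex l'
         end) ts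
  end.

Fixpoint tree_le (s t : rtree A) {struct s} : Prop :=
  match s with
  | RLeaf x => leaf_le x t
  | RNode ss =>
      match t with
      | RLeaf _ => False
      | RNode ts =>
          (fix allc (l : list (rtree A)) : Prop :=
             match l with
             | [] => True
             | si :: l' => (exists tj, In tj ts /\ tree_le si tj) /\ allc l'
             end) ss
      end
  end.
End TreeOrder.

Definition Tf (A : Type) : Type := { t : rtree A | wf_tree t }.
Definition Tf_le {A : Type} (leA : A -> A -> Prop) (s t : Tf A) : Prop :=
  tree_le A leA (proj1_sig s) (proj1_sig t).

Definition one_le (x y : unit) : Prop := True.

Definition linearization {T : Type} (le L : T -> T -> Prop) : Prop :=
  (forall x, L x x) /\
  (forall x y z, L x y -> L y z -> L x z) /\
  (forall x y, L x y \/ L y x) /\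
  (forall x y, le x y -> L x y) /\
  (forall x y, le x y -> ~ le y x -> ~ L y x).

(* The order type of the linear quasi-order L is <= omega: L is (the pullback
   of) a suborder of (nat, <=). *)
Definition otype_le_omega {T : Type} (L : T -> T -> Prop) : Prop :=
  exists f : T -> nat, forall x y, L x y <-> f x <= f y.

Definition otype_ge_nat {T : Type} (L : T -> T -> Prop) (n : nat) : Prop :=
  exists s : nat -> T, forall i j, i < j -> j < n -> ~ L (s j) (s i).

(* o(P) = omega: every linearization has order type <= omega, and the order
   types of linearizations are unbounded below omega (so their sup is omega). *)
Definition max_otype_is_omega {T : Type} (le : T -> T -> Prop) : Prop :=
  (forall L, linearization le L -> otype_le_omega L) /\
  (forall n : nat, exists L, linearization le L /\ otype_ge_nat L n).

(* On the trees over the one-element quasi-order, s <= t holds exactly when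
   height s <= height t: a leaf lies below every tree, no node lies below a
   leaf, and a node lies below a node iff each child lies below some child,
   which by induction means that the highest child of the first is at most
   as high as the highest child of the second.  So the tree order is total
   and its quotient is (nat, <=); a linearization of a total quasi-order is
   the order itself, hence has type omega, and the spines of every height
   show that this type is attained. *)

From Stdlib Require Import List Arith Lia.
Import ListNotations.

Section NatRank.
Variables (T : Type) (le : T -> T -> Prop) (rank : T -> nat) (unrank : nat -> T).
Hypothesis le_iff_rank : forall x y, le x y <-> rank x <= rank y.
Hypothesis rank_unrank : forall n, rank (unrank n) = n.

Lemma linearization_rank_iff (L : T -> T -> Prop) :
  linearization le L -> forall x y, L x y <-> rank x <= rank y.
Proof.
  intros (_ & _ & _ & le_L & lt_notL) x y; split; intro Hxy.
  - destruct (Nat.le_gt_cases (rank x) (rank y)) as [| Hyx]; [assumption |].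
    exfalso; apply (lt_notL y x); [apply le_iff_rank; lia | rewrite le_iff_rank; lia | exact Hxy].
  - apply le_L, le_iff_rank, Hxy.
Qed.

Lemma linearization_rank : linearization le le.
Proof.
  unfold linearization; setoid_rewrite le_iff_rank; repeat split; intros; lia.
Qed.

Lemma max_otype_is_omega_rank : max_otype_is_omega le.
Proof.
  split.
  - intros L HL; exists rank; exact (linearization_rank_iff L HL).
  - intro n; exists le; split; [exact linearization_rank |].
    exists unrank; intros i j Hij _; rewrite le_iff_rank, !rank_unrank; lia.
Qed.

End NatRank.

Lemma In_le_list_max (l : list nat) (x : nat) : In x l -> x <= list_max l.
Proof.
  intro Hx; pose proof (proj1 (list_max_le l (list_max l)) (le_n _)) as Hall.
  rewrite Forall_forall in Hall; exact (Hall x Hx).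
Qed.

Lemma list_max_In (l : list nat) : l <> [] -> In (list_max l) l.
Proof.
  induction l as [| x l IHl]; [tauto | intros _].
  change (In (Nat.max x (list_max l)) (x :: l)).
  destruct l as [| y l]; [cbn; lia |].
  destruct (Nat.max_spec x (list_max (y :: l))) as [[_ ->] | [_ ->]].
  - right; apply IHl; discriminate.
  - left; reflexivity.
Qed.

Lemma Forall_dominated_iff_list_max_le {X : Type} (h : X -> nat) (ss ts : list X) :
  ts <> [] ->
  Forall (fun s => exists t, In t ts /\ h s <= h t) ss <->
  list_max (map h ss) <= list_max (map h ts).
Proof.
  intro ts_ne; rewrite list_max_le, Forall_map, !Forall_forall; split.
  - intros Hdom s Hs; destruct (Hdom s Hs) as (t & Ht & Hst).
    pose proof (In_le_list_max (map h ts) (h t) (in_map h ts t Ht)); lia.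
  - intros Hle s Hs.
    assert (Hne : map h ts <> []) by (destruct ts; [contradiction | discriminate]).
    destruct (proj1 (in_map_iff h ts _) (list_max_In _ Hne)) as (t & Ht & Hin).
    exists t; split; [exact Hin | rewrite Ht; exact (Hle s Hs)].
Qed.

Section Trees.
Variables (A : Type) (leA : A -> A -> Prop).

Fixpoint height (t : rtree A) : nat :=
  match t with
  | RLeaf _ => 0
  | RNode ts => S (list_max (map height ts))
  end.

Lemma rtree_nested_ind (P : rtree A -> Prop) :
  (forall a, P (RLeaf a)) -> (forall ts, Forall P ts -> P (RNode ts)) ->
  forall t, P t.
Proof.
  intros Hleaf Hnode; fix IH 1; intros [a | ts]; [apply Hleaf | apply Hnode].
  induction ts as [| u ts IHts]; constructor; [apply IH | exact IHts].
Qed.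

Lemma wf_tree_node (ts : list (rtree A)) :
  wf_tree (RNode ts) <-> ts <> [] /\ Forall wf_tree ts.
Proof.
  cbn; apply and_iff_compat_l.
  induction ts as [| u ts IHts]; cbn; [split; auto |].
  rewrite Forall_cons_iff, IHts; reflexivity.
Qed.

Lemma leaf_le_node (x : A) (ts : list (rtree A)) :
  leaf_le A leA x (RNode ts) <-> Exists (leaf_le A leA x) ts.
Proof.
  cbn; induction ts as [| u ts IHts]; cbn.
  - split; [tauto | intro H; inversion H].
  - rewrite Exists_cons, IHts; reflexivity.
Qed.

Lemma tree_le_node (ss ts : list (rtree A)) :
  tree_le A leA (RNode ss) (RNode ts) <->
  Forall (fun s => exists t, In t ts /\ tree_le A leA s t) ss.
Proof.
  cbn; induction ss as [| s ss IHss]; cbn; [split; auto |].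
  rewrite Forall_cons_iff, IHss; reflexivity.
Qed.

Hypothesis leA_full : forall x y, leA x y.

Lemma leaf_le_wf (x : A) (t : rtree A) : wf_tree t -> leaf_le A leA x t.
Proof.
  induction t as [a | ts IH] using rtree_nested_ind; [intros _; apply leA_full |].
  rewrite wf_tree_node, leaf_le_node; intros [ts_ne Hwf].
  destruct ts as [| u ts]; [contradiction |].
  apply Exists_cons_hd; inversion IH; inversion Hwf; auto.
Qed.

Lemma tree_le_iff_height_le (s t : rtree A) : wf_tree s -> wf_tree t ->
  tree_le A leA s t <-> height s <= height t.
Proof.
  revert t; induction s as [a | ss IH] using rtree_nested_ind; intros t Ws Wt.
  - cbn; split; [lia | intros _; apply leaf_le_wf, Wt].
  - destruct t as [b | ts]; [cbn; split; [tauto | lia] |].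
    apply wf_tree_node in Ws as [_ Wss]; apply wf_tree_node in Wt as [ts_ne Wts].
    rewrite tree_le_node; cbn [height].
    rewrite <- Nat.succ_le_mono, <- Forall_dominated_iff_list_max_le by exact ts_ne.
    rewrite Forall_forall in IH, Wss, Wts |- *; rewrite Forall_forall.
    split; intros Hdom s Hs; destruct (Hdom s Hs) as (t & Ht & Hst);
      exists t; split; try exact Ht; apply (IH s Hs t (Wss s Hs) (Wts t Ht)); exact Hst.
Qed.

Fixpoint spine (a : A) (n : nat) : rtree A :=
  match n with
  | 0 => RLeaf a
  | S n => RNode [spine a n]
  end.

Lemma spine_wf (a : A) (n : nat) : wf_tree (spine a n).
Proof. induction n; cbn; [exact I | split; [discriminate | auto]]. Qed.

Lemma height_spine (a : A) (n : nat) : height (spine a n) = n.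
Proof. induction n; cbn; [reflexivity | rewrite IHn; lia]. Qed.

End Trees.

Theorem lemma3p12 : max_otype_is_omega (@Tf_le unit one_le).
Proof.
  apply (max_otype_is_omega_rank _ _
           (fun t : Tf unit => height unit (proj1_sig t))
           (fun n => exist _ (spine unit tt n) (spine_wf unit tt n))).
  - intros [s Ws] [t Wt]; exact (tree_le_iff_height_le unit one_le (fun _ _ => I) s t Ws Wt).
  - intro n; exact (height_spine unit tt n).
Qed.
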